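(* Let $u,v\in\{0,1,2\}^*$ with $\theta(u),\theta(v)\in\{0,1,\dots,7\}$. If $\theta(u)=\theta(v)$, then $\lambda_{ua}=\lambda_{va}$ and $s_{ua}=s_{va}$ for every $a\in\{0,1,2\}$.
   Context: Fibonacci numbers: $F_0=1$, $F_1=2$, $F_n=F_{n-1}+F_{n-2}$ for $n\ge2$ (so $F_2=3$). For a word $w=w_{k-1}\cdots w_0$ over $\{0,1,2\}$ (digits indexed from the right), $\mathrm{val}_{\mathcal{F}}(w)=\sum_{i=0}^{k-1}w_iF_i$. $\mathcal{S}=\{000,001,010,100,101\}$. Let $u\mapsto w_u\in\{0,1\}^*$ (length-preserving) and $u\mapsto s_u\in\mathcal{S}$ be the unique maps on $\{0,1,2\}^*$ such that $w_u$ is a prefix of $w_{ua}$ for every letter $a\in\{0,1,2\}$ and $\mathrm{val}_{\mathcal{F}}(u)=\mathrm{val}_{\mathcal{F}}(w_us_u)$ for all $u$; and let $\lambda_{ua}\in\{0,1\}$ be defined by $w_{ua}=w_u\lambda_{ua}$. Define $\theta:\{0,1,2\}^*\to\mathbb{Z}$ by $\theta(\varepsilon)=0$ and $\theta(ua)=\mathrm{val}_{\mathcal{F}}(s_u)+\mathrm{val}_{\mathcal{F}}(s_{ua})-F_2\lambda_{ua}+a$ for $u\in\{0,1,2\}^*$, $a\in\{0,1,2\}$. *)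

From mathcomp Require Import all_boot all_order all_algebra.
Set Implicit Arguments. Unset Strict Implicit. Unset Printing Implicit Defensive.
Import GRing.Theory Num.Theory.

(* Words are sequences written left to right: the word w_{k-1} ... w_0 is the
   sequence [:: w_{k-1}; ...; w_0]; so the rightmost digit (index 0) is the
   last element, and appending a letter a on the right ("ua") is rcons u a. *)

Fixpoint fib (n : nat) : nat :=
  match n with
  | 0 => 1
  | 1 => 2
  | (S ((S m) as k)) => fib k + fib m
  end.

Definition valF (w : seq nat) : nat :=
  \sum_(i < size w) nth 0 (rev w) i * fib i.

Definition valD (u : seq 'I_3) : nat := valF (map (fun x : 'I_3 => nat_of_ord x) u).
Definition valB (w : seq bool) : nat := valF (map nat_of_bool w).

Definition Sset : seq (seq bool) :=
  [:: [:: false; false; false]; [:: false; false; true]; [:: false; true; false];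
      [:: true; false; false]; [:: true; false; true]].

Definition is_normalizer (w : seq 'I_3 -> seq bool) (s : seq 'I_3 -> seq bool) : Prop :=
  [/\ forall u, size (w u) = size u,
      forall u, s u \in Sset,
      forall u a, prefix (w u) (w (rcons u a))
    & forall u, valD u = valB (w u ++ s u)].

(* lambda_{ua}: the last letter of w_{ua} (w_{ua} = w_u lambda_{ua}) *)
Definition lam (w : seq 'I_3 -> seq bool) (u : seq 'I_3) (a : 'I_3) : bool :=
  last false (w (rcons u a)).

Definition theta (w : seq 'I_3 -> seq bool) (s : seq 'I_3 -> seq bool)
    (x : seq 'I_3) : int :=
  match x with
  | [::] => 0%R
  | y :: t =>
      let u := belast y t in
      let a := last y t in
      ((valB (s u))%:Z + (valB (s (rcons u a)))%:Z
        - (fib 2 * lam w u a)%:Z + (nat_of_ord a)%:Z)%R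
  end.

From mathcomp Require Import all_boot all_order all_algebra.
From mathcomp Require Import zify.
Import GRing.Theory.

(* Adding a letter a to theta(u) gives exactly the "code" of the
   pair (lambda_{ua}, s_{ua}):
       theta(u) + a = 5 * lambda_{ua} + val(s_{ua}).
   For nonempty u = u'b this is a carry identity obtained by comparing the defining
   equalities val(x) = val(w_x s_x) for x = u', u'b, u'ba, using the Fibonacci
   recurrence on positional values.  Since the five words of S have the
   values 0,...,4, the code 5*lambda + val(s) determines (lambda, s), so
   theta(u) = theta(v) forces lambda_{ua} = lambda_{va} and s_{ua} = s_{va}. *)

Definition valF_shift (k : nat) (c : seq nat) : nat :=
  \sum_(i < size c) nth 0 (rev c) i * fib (i + k).

Lemma valF_shift0 (c : seq nat) : valF_shift 0 c = valF c.
Proof. by apply: eq_bigr => i _; rewrite addn0. Qed.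

Lemma valF_shift_nil (k : nat) : valF_shift k [::] = 0.
Proof. by rewrite /valF_shift big_ord0. Qed.

Lemma valF_shift_rcons (k : nat) (c : seq nat) (p : nat) :
  valF_shift k (rcons c p) = valF_shift k.+1 c + p * fib k.
Proof.
rewrite /valF_shift size_rcons big_ord_recl rev_rcons addnC; congr (_ + _).
by apply: eq_bigr => i _; rewrite lift0 addSnnS.
Qed.

Lemma valF_shift_cat (k : nat) (c d : seq nat) :
  valF_shift k (c ++ d) = valF_shift (size d + k) c + valF_shift k d.
Proof.
elim/last_ind: d k => [|d p IHd] k; first by rewrite cats0 valF_shift_nil addn0.
by rewrite -rcons_cat !valF_shift_rcons IHd size_rcons addSnnS addnA.
Qed.

Lemma valF_shift_rec (k : nat) (c : seq nat) :
  valF_shift k.+2 c = valF_shift k.+1 c + valF_shift k c.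
Proof. by rewrite /valF_shift -big_split; apply: eq_bigr => i _; rewrite !addnS mulnDr. Qed.

Lemma valF_shift_rcons2 (k : nat) (c : seq nat) (p q : nat) :
  valF_shift k (rcons (rcons c p) q) + p * fib k
  = valF_shift k (rcons c p) + valF_shift k c + p * fib k.+1 + q * fib k.
Proof. rewrite !valF_shift_rcons valF_shift_rec; lia. Qed.

Lemma valF_cons (x : nat) (d : seq nat) : valF (x :: d) = x * fib (size d) + valF d.
Proof.
rewrite -!valF_shift0 -cat1s valF_shift_cat addn0.
by rewrite -[[:: x]]/(rcons [::] x) valF_shift_rcons valF_shift_nil.
Qed.

Lemma valF_nil : valF [::] = 0.
Proof. by rewrite -valF_shift0 valF_shift_nil. Qed.

Lemma valB_Sset (t : seq bool) : t \in Sset -> valB t = index t Sset.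
Proof.
rewrite !inE => /orP [/eqP -> | /orP [/eqP -> | /orP [/eqP -> | /orP [/eqP -> | /eqP ->]]]];
  by rewrite /valB /= !valF_cons valF_nil.
Qed.

Lemma size_Sset (t : seq bool) : t \in Sset -> size t = 3.
Proof. by move=> /(allP (isT : all (fun x => size x == 3) Sset)) /eqP. Qed.

Lemma code_Sset_inj (b1 b2 : bool) (t1 t2 : seq bool) : t1 \in Sset -> t2 \in Sset ->
  5 * b1 + valB t1 = 5 * b2 + valB t2 -> b1 = b2 /\ t1 = t2.
Proof.
move=> t1S t2S; rewrite !valB_Sset //.
have lt1 : index t1 Sset < 5 by rewrite index_mem.
have lt2 : index t2 Sset < 5 by rewrite index_mem.
have -> : t1 = t2 <-> index t1 Sset = index t2 Sset.
  by split=> [-> // | eq_idx]; rewrite -(nth_index [::] t1S) -(nth_index [::] t2S) eq_idx.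
move: (index t1 Sset) (index t2 Sset) lt1 lt2 => i j lt_i lt_j.
by case: b1; case: b2 => /= E; split; lia.
Qed.

Definition digits (u : seq 'I_3) : seq nat := map (fun x : 'I_3 => nat_of_ord x) u.
Definition bits (w : seq bool) : seq nat := map nat_of_bool w.

Section Normalizer.

Variables (w : seq 'I_3 -> seq bool) (s : seq 'I_3 -> seq bool).
Hypothesis normal_ws : is_normalizer w s.

Lemma w_nil : w [::] = [::].
Proof. by case: normal_ws => size_w _ _ _; apply/size0nil; rewrite size_w. Qed.

(* w_{ua} = w_u lambda_{ua}: the prefix property with the length condition. *)
Lemma w_rcons (u : seq 'I_3) (a : 'I_3) : w (rcons u a) = rcons (w u) (lam w u a).
Proof.
case: normal_ws => size_w _ prefix_w _.
case/prefixP: (prefix_w u a) => t Et.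
have : size t = 1.
  move: (size_w (rcons u a)); rewrite Et size_cat size_w size_rcons -[(size u).+1]addn1.
  by move/addnI.
case: t Et => [|x [|]] //= Et _.
by rewrite /lam Et cats1 last_rcons.
Qed.

Lemma normalizer_value (u : seq 'I_3) :
  valF (digits u) = valF_shift 3 (bits (w u)) + valB (s u).
Proof.
case: normal_ws => _ s_in_S _ val_eq.
rewrite /valD in val_eq; rewrite val_eq /valB /bits map_cat -valF_shift0.
by rewrite valF_shift_cat size_map size_Sset // valF_shift0.
Qed.

Lemma carry_nil (a : 'I_3) : 5 * lam w [::] a + valB (s [:: a]) = a.
Proof.
have := normalizer_value [:: a].
rewrite -[[:: a]]/(rcons [::] a) w_rcons w_nil /digits /bits /=.
by rewrite valF_cons valF_nil -[[:: _]]/(rcons [::] _) valF_shift_rcons valF_shift_nil /=; lia.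
Qed.

(* Carry identity: comparing the normalizations of u, ub and uba. *)
Lemma carry (u : seq 'I_3) (b a : 'I_3) :
  5 * lam w (rcons u b) a + valB (s (rcons (rcons u b) a)) + 3 * lam w u b
  = valB (s u) + valB (s (rcons u b)) + b + a.
Proof.
have val_u := normalizer_value u.
have val_ub := normalizer_value (rcons u b).
have val_uba := normalizer_value (rcons (rcons u b) a).
rewrite !w_rcons /digits /bits !map_rcons -/(digits u) -/(bits (w u)) in val_ub val_uba.
rewrite -/(digits u) in val_u.
have rec_digits := valF_shift_rcons2 0 (digits u) b a.
have rec_bits := valF_shift_rcons2 3 (bits (w u)) (lam w u b) (lam w (rcons u b) a).
rewrite !valF_shift0 /= in rec_digits rec_bits.
lia.
Qed.

Lemma theta_add_letter (u : seq 'I_3) (a : 'I_3) :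
  (theta w s u + (nat_of_ord a)%:Z = (5 * lam w u a + valB (s (rcons u a)))%:Z)%R.
Proof.
case: u => [|y t] /=; first by rewrite carry_nil add0r.
have := carry (belast y t) (last y t) a.
rewrite -lastI /=; lia.
Qed.

End Normalizer.

Theorem lemma5p6 (w : seq 'I_3 -> seq bool) (s : seq 'I_3 -> seq bool) :
  is_normalizer w s ->
  forall u v : seq 'I_3,
    (0 <= theta w s u <= 7)%R ->
    (0 <= theta w s v <= 7)%R ->
    theta w s u = theta w s v ->
    forall a : 'I_3,
      lam w u a = lam w v a /\ s (rcons u a) = s (rcons v a).
Proof.
move=> normal_ws u v _ _ eq_theta a.
have [_ s_in_S _ _] := normal_ws.
apply: code_Sset_inj; rewrite ?s_in_S //.
have := @theta_add_letter w s normal_ws u a; have := @theta_add_letter w s normal_ws v a.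
rewrite eq_theta; lia.
Qed.
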